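(* Let $X$ be any $E\mathcal M$-simplicial set. Then the map $\Phi\colon E\mathrm{Inj}(2\times\omega,\omega)\times_{E\mathcal M^2}(X\times * )\to X\times *\cong X$ has image exactly $X^\mu$ and is an isomorphism $E\mathrm{Inj}(2\times\omega,\omega)\times_{E\mathcal M^2}(X\times * )\cong X^\mu$.
   Context: $\omega=\{1,2,\dots\}$, $\mathcal M$ the monoid of injections $\omega\to\omega$, $\mathcal M_A$ those fixing $A\subset\omega$ pointwise; $A$ co-infinite if $\omega\setminus A$ is infinite. $E\mathcal M$ is the simplicial monoid with $(E\mathcal M)_n=\mathcal M^{1+n}$, pointwise multiplication, structure maps by precomposition. $x\in X_n$ is $k$-supported on $A$ if $i_k(u).x=x$ for all $u\in\mathcal M_A$ ($i_k$ inclusion of the $(1+k)$-th factor). $X^\mu\subset X$ is the sub-object of simplices that are for every $k$ $k$-supported on some co-infinite set. $*$ is the terminal $E\mathcal M$-simplicial set. $E\mathrm{Inj}(2\times\omega,\omega)$ has $m$-simplices tuples $(f_0,\dots,f_m)$ of injections $2\times\omega\to\omega$ ($2=\{1,2\}$). $E\mathrm{Inj}(2\times\omega,\omega)\times_{E\mathcal M^2}(X\times Y)$ is the quotient of $E\mathrm{Inj}(2\times\omega,\omega)\times X\times Y$ by the equivalence relation generated on $m$-simplices by $(f_0,\dots,f_m;u.x,v.y)\sim(f_0(u^{(0)}\amalg v^{(0)}),\dots,f_m(u^{(m)}\amalg v^{(m)});x,y)$ for $u=(u^{(i)}),v=(v^{(i)})\in(E\mathcal M)_m$, with $E\mathcal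 M$ acting by postcomposition; $\Phi[f_0,\dots,f_m;x,y]=((f_0\iota_1,\dots,f_m\iota_1).x,(f_0\iota_2,\dots,f_m\iota_2).y)$ where $\iota_j(t)=(j,t)$. *)

From Stdlib Require Import Relations.
From mathcomp Require Import all_boot.
Set Implicit Arguments. Unset Strict Implicit. Unset Printing Implicit Defensive.

(* omega = {1,2,...} is modelled by nat (relabelling t |-> t-1). *)

Record Minj := MInj { mfun :> nat -> nat; minj : injective mfun }.

Definition Mid : Minj := @MInj id (fun x y (h : id x = id y) => h).

Lemma Mcomp_inj (u v : Minj) : injective (fun t => u (v t)).
Proof. move=> x y h; exact: (@minj v x y (@minj u _ _ h)). Qed.

Definition Mcomp (u v : Minj) : Minj := MInj (@Mcomp_inj u v).

Record Dmap (m n : nat) := DMap {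
  dfun :> 'I_m.+1 -> 'I_n.+1;
  dmono : {homo dfun : i j / i <= j} }.

Definition Did (n : nat) : Dmap n n := @DMap n n id (fun i j h => h).

Lemma Dcomp_mono m n p (b : Dmap n p) (a : Dmap m n) :
  {homo (fun i => b (a i)) : i j / i <= j}.
Proof. by move=> i j h; apply: dmono; apply: dmono. Qed.

Definition Dcomp m n p (b : Dmap n p) (a : Dmap m n) : Dmap m p :=
  DMap (@Dcomp_mono m n p b a).

(** E M-simplicial sets: simplicial sets X with an action of
    (EM)_n = M^{1+n} (here 'I_n.+1 -> Minj, pointwise multiplication)
    on X_n, compatible with the simplicial structure
    (structure maps of EM are precomposition). *)
Record EMsSet := EMSSet {
  sx :> nat -> Type;
  sop : forall m n, Dmap m n -> sx n -> sx m;
  sact : forall n, ('I_n.+1 -> Minj) -> sx n -> sx n;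
  sop_id : forall n (x : sx n), sop (Did n) x = x;
  sop_comp : forall m n p (a : Dmap m n) (b : Dmap n p) (x : sx p),
      sop (Dcomp b a) x = sop a (sop b x);
  sact_id : forall n (x : sx n), sact (fun _ => Mid) x = x;
  sact_comp : forall n (u v : 'I_n.+1 -> Minj) (x : sx n),
      sact (fun i => Mcomp (u i) (v i)) x = sact u (sact v x);
  sop_act : forall m n (a : Dmap m n) (u : 'I_n.+1 -> Minj) (x : sx n),
      sop a (sact u x) = sact (fun i => u (a i)) (sop a x) }.

Definition Term : EMsSet :=
  @EMSSet (fun _ => unit) (fun _ _ _ _ => tt) (fun _ _ _ => tt)
    (fun _ x => match x with tt => erefl end)
    (fun _ _ _ _ _ _ => erefl)
    (fun _ x => match x with tt => erefl end)
    (fun _ _ _ _ => erefl)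
    (fun _ _ _ _ _ => erefl).

Definition ik (n : nat) (k : 'I_n.+1) (u : Minj) : 'I_n.+1 -> Minj :=
  fun i => if i == k then u else Mid.

Definition fixes (A : nat -> Prop) (u : Minj) : Prop := forall a, A a -> u a = a.

Definition coinfinite (A : nat -> Prop) : Prop :=
  forall N : nat, exists t, N <= t /\ ~ A t.

Definition k_supported (X : EMsSet) (n : nat) (k : 'I_n.+1)
  (A : nat -> Prop) (x : X n) : Prop :=
  forall u : Minj, fixes A u -> sact (ik k u) x = x.

Definition in_mu (X : EMsSet) (n : nat) (x : X n) : Prop :=
  forall k : 'I_n.+1, exists A : nat -> Prop, coinfinite A /\ k_supported k A x.

(** Injections 2 x omega -> omega, with 2 = {1,2} modelled by 'I_2. *)
Record Inj2 := IInj2 { ifun :> 'I_2 * nat -> nat; iinj : injective ifun }.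

Definition two1 : 'I_2 := @Ordinal 2 0 erefl.
Definition two2 : 'I_2 := @Ordinal 2 1 erefl.

Lemma restr_inj (f : Inj2) (j : 'I_2) : injective (fun t => f (j, t)).
Proof. by move=> x y /iinj [] . Qed.
Definition restr (f : Inj2) (j : 'I_2) : Minj := MInj (@restr_inj f j).

Definition coprod_fun (u v : Minj) (p : 'I_2 * nat) : 'I_2 * nat :=
  (p.1, if p.1 == two1 then u p.2 else v p.2).
Lemma pre_inj (f : Inj2) (u v : Minj) :
  injective (fun p => f (coprod_fun u v p)).
Proof.
move=> [i x] [j y] /iinj; rewrite /coprod_fun /= => -[<-].
by case: (i == two1) => /minj ->.
Qed.
Definition pre (f : Inj2) (u v : Minj) : Inj2 := IInj2 (@pre_inj f u v).

Lemma post_inj (u : Minj) (f : Inj2) : injective (fun p => u (f p)).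
Proof. move=> x y h; exact: (@iinj f x y (@minj u _ _ h)). Qed.
Definition post (u : Minj) (f : Inj2) : Inj2 := IInj2 (@post_inj u f).

(** n-simplices of E Inj(2 x omega, omega) x X x Y (before quotienting) *)
Definition btriple (X Y : EMsSet) (n : nat) : Type :=
  (('I_n.+1 -> Inj2) * X n * Y n)%type.

(* generating relation of E Inj(2 x omega, omega) x_{EM^2} (X x Y) *)
Definition bal_step (X Y : EMsSet) (n : nat) (t t' : btriple X Y n) : Prop :=
  exists (f : 'I_n.+1 -> Inj2) (u v : 'I_n.+1 -> Minj) (x : X n) (y : Y n),
    t = (f, sact u x, sact v y) /\
    t' = (fun i => pre (f i) (u i) (v i), x, y).

Definition bal_equiv (X Y : EMsSet) (n : nat) : relation (btriple X Y n) :=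
  clos_refl_sym_trans _ (@bal_step X Y n).

Definition bop (X Y : EMsSet) m n (a : Dmap m n) (t : btriple X Y n)
  : btriple X Y m :=
  (fun i => t.1.1 (a i), sop a t.1.2, sop a t.2).

Definition bact (X Y : EMsSet) n (u : 'I_n.+1 -> Minj) (t : btriple X Y n)
  : btriple X Y n :=
  (fun i => post (u i) (t.1.1 i), t.1.2, t.2).

Definition Phi (X Y : EMsSet) n (t : btriple X Y n) : (X n * Y n)%type :=
  (sact (fun i => restr (t.1.1 i) two1) t.1.2,
   sact (fun i => restr (t.1.1 i) two2) t.2).

From Stdlib Require Import Relations.
From mathcomp Require Import all_boot.
From Stdlib Require Import ClassicalEpsilon ProofIrrelevance FunctionalExtensionality.
From mathcomp Require Import zify.
Set Implicit Arguments. Unset Strict Implicit. Unset Printing Implicit Defensive.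

(* (f o iota_1).x is fixed by every u fixing the image A of f o iota_1
   pointwise, and the complement of A contains the infinite image of
   f o iota_2; so Phi lands in X^mu.  Conversely, a simplex k-supported on
   co-infinite sets A_k equals Phi[f; x] for any f whose first restrictions
   fix the A_k.
   For injectivity: as * is terminal, the class of [f; x] depends only on
   f o iota_1, and [f; x] = [H; (f o iota_1).x] whenever H o iota_1 fixes the
   image of f o iota_1.  If y = (f o iota_1).x = (f' o iota_1).x', choose such
   H, H' whose first restrictions S, S' commute; then [H; y] = [H; S'.y] =
   [H o (S' + id); y] = [H' o (S + id); y] = [H'; S.y] = [H'; y]. *)

Lemma Minj_ext (u v : Minj) : u =1 v -> u = v.
Proof.
case: u v => [f f_inj] [g g_inj] /= /functional_extensionality fg.
by subst g; congr MInj; apply: proof_irrelevance.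
Qed.

Lemma Inj2_ext (f g : Inj2) : f =1 g -> f = g.
Proof.
case: f g => [f f_inj] [g g_inj] /= /functional_extensionality fg.
by subst g; congr IInj2; apply: proof_irrelevance.
Qed.

Lemma sact_ext (X : EMsSet) n (u v : 'I_n.+1 -> Minj) (x : X n) :
  (forall i, u i =1 v i) -> sact u x = sact v x.
Proof.
by move=> uv; congr sact; apply: functional_extensionality => i; apply: Minj_ext.
Qed.

Lemma sact_fixed_image (X : EMsSet) n (u f : 'I_n.+1 -> Minj) (x : X n) :
  (forall i t, u i (f i t) = f i t) -> sact u (sact f x) = sact f x.
Proof. by move=> uf; rewrite -sact_comp; apply: sact_ext => i t /=. Qed.

Lemma two_cases (j : 'I_2) : j = two1 \/ j = two2.
Proof. by case: j => [[|[|//]]] lt_j2; [left | right]; apply: val_inj. Qed.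

Lemma incr_inj (f : nat -> nat) : (forall n, f n < f n.+1) -> injective f.
Proof. by move=> f_incr; apply/incn_inj/leq_mono/(homo_ltn ltn_trans). Qed.

Lemma inj_unbounded (p : nat -> nat) : injective p -> forall N, exists j, N < p j.
Proof.
move=> p_inj N; case: (pickP (fun j : 'I_N.+2 => N < p j)) => [j | small].
  by exists j.
have p_lt (j : 'I_N.+2) : p j < N.+1 by rewrite ltnS leqNgt small.
suff: #|'I_N.+2| <= #|'I_N.+1| by rewrite !card_ord ltnn.
apply: (@leq_card _ _ (fun j => Ordinal (p_lt j))) => i j /(congr1 val) /p_inj.
exact: val_inj.
Qed.

Lemma double1_inj : injective (fun n => n.*2.+1).
Proof. by move=> m n [] /double_inj. Qed.

Definition Mdouble : Minj := MInj double_inj.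
Definition Mdouble1 : Minj := MInj double1_inj.

Definition above (r : nat -> nat) (N : nat) : nat :=
  epsilon (inhabits 0) (fun j => N < r j).

Lemma aboveP r N : injective r -> N < r (above r N).
Proof. by move=> /inj_unbounded /(_ N) /(epsilon_spec (inhabits 0)). Qed.

Section Interleave.
Variables p q : nat -> nat.

Definition alternate (n : nat) : nat -> nat := if odd n then q else p.

Fixpoint ileave_idx (n : nat) : nat :=
  if n is m.+1 then above (alternate n) (alternate m (ileave_idx m)) else above p 0.

Definition ileave (n : nat) : nat := alternate n (ileave_idx n).

Hypotheses (p_inj : injective p) (q_inj : injective q).

Lemma ileave_inj : injective ileave.
Proof.
apply: incr_inj => n; rewrite [ileave n.+1]/ileave /=.
by apply: aboveP; rewrite /alternate; case: odd.
Qed.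

Lemma ileave_even s : ileave s.*2 = p (ileave_idx s.*2).
Proof. by rewrite /ileave /alternate odd_double. Qed.

Lemma ileave_odd s : ileave s.*2.+1 = q (ileave_idx s.*2.+1).
Proof. by rewrite /ileave /alternate /= odd_double. Qed.

Lemma ileave_range n : exists j, ileave n = p j \/ ileave n = q j.
Proof.
by exists (ileave_idx n); rewrite /ileave /alternate; case: odd; [right | left].
Qed.

Lemma ileave_idx_even_inj : injective (fun s => ileave_idx s.*2).
Proof.
move=> m n mn; apply/double_inj/ileave_inj; by rewrite !ileave_even mn.
Qed.

Lemma ileave_idx_odd_inj : injective (fun s => ileave_idx s.*2.+1).
Proof.
move=> m n mn; apply/double1_inj/ileave_inj; by rewrite !ileave_odd mn.
Qed.

End Interleave.

Section Along.
Variable M : nat -> nat.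

Definition preim (s : nat) : option nat :=
  if excluded_middle_informative (exists n, M n = s) then
    Some (epsilon (inhabits 0) (fun n => M n = s))
  else None.

Variant preim_spec (s : nat) : option nat -> Prop :=
  | PreimSome n of M n = s : preim_spec s (Some n)
  | PreimNone of (forall n, M n <> s) : preim_spec s None.

Lemma preimP s : preim_spec s (preim s).
Proof.
rewrite /preim; case: excluded_middle_informative => [hs | hs].
  by apply: PreimSome; apply: (epsilon_spec (inhabits 0) (fun n => M n = s)).
by apply: PreimNone => n Mn; apply: hs; exists n.
Qed.

Definition along (g : nat -> nat) (s : nat) : nat :=
  if preim s is Some n then M (g n) else s.

Hypothesis M_inj : injective M.

Lemma alongM g n : along g (M n) = M (g n).
Proof. by rewrite /along; case: preimP => [m /M_inj -> | /(_ n)]. Qed.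

Lemma along_inj g : injective g -> injective (along g).
Proof.
move=> g_inj s t; rewrite /along.
case: preimP => [m <- | Ms]; case: preimP => [n <- | Mt] //.
- by move/M_inj/g_inj ->.
- by move=> Mgm; case: (Mt (g m)).
- by move=> Mgn; case: (Ms (g n)).
Qed.

Lemma along_fixed g s : (forall n, M n = s -> g n = n) -> along g s = s.
Proof. by rewrite /along => gs; case: preimP => // n Mn; rewrite gs. Qed.

Lemma along_neqM g s m : (forall n, g n <> m) -> along g s <> M m.
Proof.
rewrite /along => gm; case: preimP => [n _ /M_inj | Ms /esym]; [exact: gm | exact: Ms].
Qed.

Lemma along_comp g h s : along g (along h s) = along (g \o h) s.
Proof.
rewrite {2}/along; case: preimP => [n <- | Ms]; first by rewrite !alongM.
by rewrite /along; case: preimP => // n /Ms.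
Qed.

End Along.

Definition spread_even (n : nat) : nat := if odd n then n else n.*2.
Definition spread_odd (n : nat) : nat := if odd n then n.*2.+1 else n.

Lemma spread_even_inj : injective spread_even.
Proof.
move=> m n; rewrite /spread_even.
by case: (boolP (odd m)); case: (boolP (odd n)) => on om; lia.
Qed.

Lemma spread_odd_inj : injective spread_odd.
Proof.
move=> m n; rewrite /spread_odd.
by case: (boolP (odd m)); case: (boolP (odd n)) => on om; lia.
Qed.

Lemma spread_even_oddC n : spread_even (spread_odd n) = spread_odd (spread_even n).
Proof.
by rewrite /spread_even /spread_odd; case on: (odd n); rewrite /= ?odd_double ?on.
Qed.

Lemma spread_even_neq n s : spread_even n <> (4 * s).+2.
Proof. rewrite /spread_even; case: (boolP (odd n)) => on; lia. Qed.

Lemma spread_odd_neq n s : spread_odd n <> (4 * s).+1.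
Proof. rewrite /spread_odd; case: (boolP (odd n)) => on; lia. Qed.

Section Copair.
Variables a b : nat -> nat.
Hypotheses (a_inj : injective a) (b_inj : injective b) (ab : forall s t, a s <> b t).

Lemma copair_inj :
  injective (fun p : 'I_2 * nat => if p.1 == two1 then a p.2 else b p.2).
Proof.
move=> [i s] [j t] /=.
case: (two_cases i) => ->; case: (two_cases j) => -> /=.
- by move/a_inj ->.
- by move/ab.
- by move/esym/ab.
- by move/b_inj ->.
Qed.

Definition Copair : Inj2 := IInj2 copair_inj.

End Copair.

Section PhiMap.
Variables X Y : EMsSet.

Lemma Phi_bal_equiv n (t t' : btriple X Y n) : bal_equiv t t' -> Phi t = Phi t'.
Proof.
elim=> {t t'} [t t' [f [u [v [x [y [-> ->]]]]]] | // | t t' _ -> //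
  | t1 t2 t3 _ -> _ -> //].
by rewrite /Phi /= -!sact_comp; congr pair; apply: sact_ext.
Qed.

Lemma Phi_bop m n (a : Dmap m n) (t : btriple X Y n) :
  Phi (bop a t) = (sop a (Phi t).1, sop a (Phi t).2).
Proof. by rewrite /Phi /= !sop_act. Qed.

Lemma Phi_bact n (u : 'I_n.+1 -> Minj) (t : btriple X Y n) :
  Phi (bact u t) = (sact u (Phi t).1, sact u (Phi t).2).
Proof. by rewrite /Phi /= -!sact_comp; congr pair; apply: sact_ext. Qed.

Lemma Phi_in_mu n (t : btriple X Y n) : in_mu (Phi t).1.
Proof.
case: t => [[f x] y] k /=.
exists (fun a => exists s, f k (two1, s) = a); split.
  move=> N; have [j ltNj] := inj_unbounded (@restr_inj (f k) two2) N.
  exists (f k (two2, j)); split; first exact: ltnW.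
  by case=> s /iinj.
move=> u fix_u; apply: sact_fixed_image => i t.
by rewrite /ik; case: eqP => [-> | _] //=; apply: fix_u; exists t.
Qed.

End PhiMap.

Section BalancedWithPoint.
Variables (X : EMsSet) (n : nat).
Implicit Types (f g k H : 'I_n.+1 -> Inj2) (x y z : X n).

Local Notation cls f x := ((f, x, tt) : btriple X Term n).
Local Notation restr1 f := (fun i => restr (f i) two1).

Lemma bal_equiv_pre g u v x :
  bal_equiv (cls g (sact u x)) (cls (fun i => pre (g i) (u i) (v i)) x).
Proof. by apply: rst_step; exists g, u, v, x, tt. Qed.

Lemma bal_equiv_reparam2 g g' (v : 'I_n.+1 -> Minj) z :
  (forall i s, g' i (two1, s) = g i (two1, s)) ->
  (forall i s, g' i (two2, s) = g i (two2, v i s)) ->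
  bal_equiv (cls g z) (cls g' z).
Proof.
move=> g'1 g'2; suff -> : g' = (fun i => pre (g i) Mid (v i)).
  by rewrite -{1}(sact_id z); apply: bal_equiv_pre.
apply: functional_extensionality => i; apply: Inj2_ext => -[j s].
by case: (two_cases j) => ->; rewrite ?g'1 ?g'2.
Qed.

(* Both classes equal that of [k; z], where the second restriction of k
   interleaves those of g and g'. *)
Lemma bal_equiv_restr1 g g' z :
  (forall i s, g i (two1, s) = g' i (two1, s)) -> bal_equiv (cls g z) (cls g' z).
Proof.
move=> gg'; pose p i := restr (g i) two2; pose q i := restr (g' i) two2.
have p_inj i : injective (p i) := @restr_inj (g i) two2.
have q_inj i : injective (q i) := @restr_inj (g' i) two2.
pose M i := ileave (p i) (q i); have M_inj i := ileave_inj (p_inj i) (q_inj i).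
have g1_M i s m : g i (two1, s) <> M i m.
  rewrite /M; have [j [-> | ->]] := ileave_range (p i) (q i) m; first by move/iinj.
  by rewrite gg' => /iinj.
pose k i := Copair (@restr_inj (g i) two1) (M_inj i) (@g1_M i).
pose kD i := pre (k i) Mid Mdouble; pose kD1 i := pre (k i) Mid Mdouble1.
have g_kD : bal_equiv (cls g z) (cls kD z).
  pose v i := MInj (ileave_idx_even_inj (p_inj i) (q_inj i)).
  by apply: (bal_equiv_reparam2 (v := v)) => i s //=; rewrite /M ileave_even.
have g'_kD1 : bal_equiv (cls g' z) (cls kD1 z).
  pose v i := MInj (ileave_idx_odd_inj (p_inj i) (q_inj i)).
  by apply: (bal_equiv_reparam2 (v := v)) => i s //=; rewrite /M ileave_odd.
have k_kD : bal_equiv (cls k z) (cls kD z).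
  exact: (bal_equiv_reparam2 (v := fun=> Mdouble)).
have k_kD1 : bal_equiv (cls k z) (cls kD1 z).
  exact: (bal_equiv_reparam2 (v := fun=> Mdouble1)).
apply: rst_trans g_kD _; apply: rst_trans (rst_sym _ _ _ _ k_kD) _.
exact: rst_trans k_kD1 (rst_sym _ _ _ _ g'_kD1).
Qed.

Lemma bal_equiv_act_restr1 f H x :
  (forall i s, H i (two1, f i (two1, s)) = f i (two1, s)) ->
  bal_equiv (cls f x) (cls H (sact (restr1 f) x)).
Proof.
move=> Hf; apply: rst_sym; apply: rst_trans (bal_equiv_pre H _ (fun=> Mid) x) _.
by apply: bal_equiv_restr1 => i s; apply: Hf.
Qed.

Lemma bal_equiv_swap H H' y :
  (forall i s, H i (two1, H' i (two1, s)) = H' i (two1, H i (two1, s))) ->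
  sact (restr1 H) y = y -> sact (restr1 H') y = y ->
  bal_equiv (cls H y) (cls H' y).
Proof.
move=> HH' Hy H'y.
apply: (rst_trans _ _ _ (cls (fun i => pre (H i) (restr (H' i) two1) Mid) y)).
  by rewrite -{1}H'y; apply: bal_equiv_pre.
apply: (rst_trans _ _ _ (cls (fun i => pre (H' i) (restr (H i) two1) Mid) y)).
  by apply: bal_equiv_restr1 => i s; apply: HH'.
by rewrite -{2}Hy; apply: rst_sym; apply: bal_equiv_pre.
Qed.

(* S and S' only move the even, resp. odd, terms of the interleaving M of the
   second restrictions of f and f', which avoid the image of the first
   restriction of f, resp. f'; they commute because spread_even and spread_odd do. *)
Lemma bal_equiv_of_Phi1_eq f f' x x' :
  sact (restr1 f) x = sact (restr1 f') x' -> bal_equiv (cls f x) (cls f' x').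
Proof.
move=> ff'; pose M i := ileave (restr (f i) two2) (restr (f' i) two2).
have M_inj i : injective (M i) := ileave_inj (@restr_inj _ _) (@restr_inj _ _).
pose S i := along (M i) spread_even; pose S' i := along (M i) spread_odd.
have S_inj i : injective (S i) := along_inj (M_inj i) spread_even_inj.
have S'_inj i : injective (S' i) := along_inj (M_inj i) spread_odd_inj.
have S_M i s t : S i s <> M i (4 * t).+2 :=
  along_neqM (M_inj i) (spread_even_neq ^~ t).
have S'_M i s t : S' i s <> M i (4 * t).+1 :=
  along_neqM (M_inj i) (spread_odd_neq ^~ t).
have M42_inj i : injective (fun t => M i (4 * t).+2) by move=> s t /M_inj; lia.
have M41_inj i : injective (fun t => M i (4 * t).+1) by move=> s t /M_inj; lia.
pose H i := Copair (S_inj i) (M42_inj i) (@S_M i).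
pose H' i := Copair (S'_inj i) (M41_inj i) (@S'_M i).
have H_fix i s : H i (two1, f i (two1, s)) = f i (two1, s).
  apply: along_fixed => m; rewrite /M /ileave /alternate /spread_even.
  by case: odd => // /iinj.
have H'_fix i s : H' i (two1, f' i (two1, s)) = f' i (two1, s).
  apply: along_fixed => m; rewrite /M /ileave /alternate /spread_odd.
  by case: odd => // /iinj.
apply: rst_trans (bal_equiv_act_restr1 (H := H) x H_fix) _.
have f'_H' := bal_equiv_act_restr1 (H := H') x' H'_fix.
rewrite ff'; apply: rst_trans _ (rst_sym _ _ _ _ f'_H').
apply: bal_equiv_swap.
- move=> i s /=; rewrite /S /S' !(along_comp (M_inj i)); congr along.
  by apply: functional_extensionality => m /=; rewrite spread_even_oddC.
- by rewrite -ff'; apply: sact_fixed_image => i s; apply: H_fix.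
- by apply: sact_fixed_image => i s; apply: H'_fix.
Qed.

End BalancedWithPoint.

Lemma bal_equiv_of_Phi_eq (X : EMsSet) n (t t' : btriple X Term n) :
  Phi t = Phi t' -> bal_equiv t t'.
Proof.
by case: t t' => [[f x] []] [[f' x'] []] /(congr1 fst); apply: bal_equiv_of_Phi1_eq.
Qed.

Lemma sact_fixed_coordinatewise (X : EMsSet) n (u : 'I_n.+1 -> Minj) (x : X n) :
  (forall k, sact (ik k (u k)) x = x) -> sact u x = x.
Proof.
move=> u_fix; pose u_ m (i : 'I_n.+1) := if i < m then u i else Mid.
suff u_m_fix m : sact (u_ m) x = x.
  by rewrite -[RHS](u_m_fix n.+1); apply: sact_ext => i t; rewrite /u_ ltn_ord.
elim: m => [|m IHm].
  by rewrite -[RHS]sact_id; apply: sact_ext => i t; rewrite /u_ ltn0.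
have [lt_m | le_m] := ltnP m n.+1; last first.
  rewrite -[RHS]IHm; apply: sact_ext => i t; have lt_im := leq_trans (ltn_ord i) le_m.
  by rewrite /u_ ltnS lt_im (ltnW lt_im).
pose k := Ordinal lt_m; rewrite -[RHS](u_fix k) -[in RHS]IHm -sact_comp.
apply: sact_ext => i t /=; rewrite /u_ /ik ltnS.
have [ne_im | ne_im | eq_im] := ltngtP i m; last first.
  by rewrite (_ : i = k) ?eqxx //; apply: val_inj.
all: by case: eqP => // ik; move: ne_im; rewrite ik ltnn.
Qed.

Lemma coinfinite_enum (A : nat -> Prop) :
  coinfinite A -> exists d : nat -> nat, injective d /\ forall n, ~ A (d n).
Proof.
move=> /choice [c c_spec]; pose d n := iter n (fun t => c t.+1) (c 0).
exists d; split; first by apply: incr_inj => m; apply: (proj1 (c_spec _)).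
by case=> [|m]; apply: (proj2 (c_spec _)).
Qed.

Lemma coinfinite_fixing_Inj2 (A : nat -> Prop) :
  coinfinite A -> exists f : Inj2, fixes A (restr f two1).
Proof.
move=> /coinfinite_enum [d [d_inj d_A]].
have d_odd_inj : injective (fun s => d s.*2.+1) by move=> s t /d_inj /double1_inj.
have double_odd s t : s.*2 <> t.*2.+1 by move/(congr1 odd); rewrite /= !odd_double.
have d_neq s t : along d double s <> d t.*2.+1 := along_neqM d_inj (double_odd ^~ t).
exists (Copair (along_inj d_inj double_inj) d_odd_inj d_neq) => a Aa /=.
by apply: along_fixed => m dm; case: (d_A m); rewrite dm.
Qed.

Lemma in_mu_Phi (X : EMsSet) n (x : X n) :
  in_mu x -> exists t : btriple X Term n, Phi t = (x, tt).
Proof.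
move=> x_mu.
have /fin_all_exists [f f_fix] k : exists f : Inj2, sact (ik k (restr f two1)) x = x.
  have [A [A_coinf x_A]] := x_mu k.
  by have [f fA] := coinfinite_fixing_Inj2 A_coinf; exists f; apply: x_A.
by exists (f, x, tt); rewrite /Phi /= sact_fixed_coordinatewise.
Qed.

Theorem proposition2p29 (X : EMsSet) :
  (* Phi is a well-defined map of EM-simplicial sets on the balanced product *)
  (forall n (t t' : btriple X Term n),
      bal_equiv t t' -> Phi t = Phi t') /\
  (forall m n (a : Dmap m n) (t : btriple X Term n),
      Phi (bop a t) = (sop a (Phi t).1, sop a (Phi t).2)) /\
  (forall n (u : 'I_n.+1 -> Minj) (t : btriple X Term n),
      Phi (bact u t) = (sact u (Phi t).1, sact u (Phi t).2)) /\
  (* Phi is injective on equivalence classes *)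
  (forall n (t t' : btriple X Term n),
      Phi t = Phi t' -> bal_equiv t t') /\
  (* the image of Phi is exactly X^mu (under X x * = X) *)
  (forall n (x : X n),
      in_mu x <-> exists t : btriple X Term n, Phi t = (x, tt)).
Proof.
split; first exact: Phi_bal_equiv.
split; first exact: Phi_bop.
split; first exact: Phi_bact.
split; first exact: bal_equiv_of_Phi_eq.
move=> n x; split; first exact: in_mu_Phi.
by case=> t tx; have := Phi_in_mu t; rewrite tx.
Qed.
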